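(* For all integers $i,j,k,m\ge0$: if $\omega_i+\omega_j+\omega_k-\omega_m=0$, or $\omega_i+\omega_j-\omega_k+\omega_m=0$, or $\omega_i-\omega_j+\omega_k+\omega_m=0$, or $-\omega_i+\omega_j+\omega_k+\omega_m=0$, then $C_{ijkm}=0$.
   Context: $\omega_n=n+1$ and $C_{ijkm}=\frac2\pi\int_{-1}^1U_i(y)U_j(y)U_k(y)U_m(y)\sqrt{1-y^2}\,dy$, $U_n$ the Chebyshev polynomial of the second kind of degree $n$. *)

From Stdlib Require Import Reals.
From Coquelicot Require Import Coquelicot.
Open Scope R_scope.

(* Chebyshev polynomials of the second kind, as functions R -> R:
   U_0 = 1, U_1 = 2y, U_{n+2} = 2y U_{n+1} - U_n. *)
Fixpoint chebU_pair (n : nat) (y : R) : R * R :=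
  match n with
  | O => (1, 2 * y)
  | S n' => let p := chebU_pair n' y in (snd p, 2 * y * snd p - fst p)
  end.

Definition chebU (n : nat) (y : R) : R := fst (chebU_pair n y).

Definition omega (n : nat) : R := INR n + 1.

Definition Ccoef (i j k m : nat) : R :=
  2 / PI * RInt (fun y => chebU i y * chebU j y * chebU k y * chebU m y
                          * sqrt (1 - y ^ 2)) (-1) 1.

From Stdlib Require Import Reals Lra Lia List.
From Coquelicot Require Import Coquelicot.
Open Scope R_scope.

(* Substituting y = cos t turns the weight sqrt (1 - y^2) dy into sin t ^ 2 dt, and
   sin t * U_n (cos t) = sin ((n + 1) t).  Hence the integrand of C_ijkm becomes
   (sin t * U_i U_j U_k (cos t)) * sin ((m + 1) t), whose first factor is a linear
   combination of sin (l t) with |l| <= i + j + k + 1.  When omega_m is the sum of the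
   other three frequencies, m + 1 = i + j + k + 3 exceeds every such |l|, so the
   integral over [0, pi] vanishes by orthogonality of the sines.  The other three
   cases are permutations of this one. *)

Lemma nat_ind2 (P : nat -> Prop) :
  P 0%nat -> P 1%nat -> (forall n, P n -> P (S n) -> P (S (S n))) -> forall n, P n.
Proof. apply Nat.pair_induction. now intros ? ? ->. Qed.

Lemma chebU_SS n y : chebU (S (S n)) y = 2 * y * chebU (S n) y - chebU n y.
Proof. reflexivity. Qed.

Lemma continuous_chebU n y : continuous (chebU n) y.
Proof.
  induction n as [| |n IHn IHSn] using nat_ind2.
  - exact (continuous_const (U := R_UniformSpace) 1 y).
  - exact (continuous_mult (fun _ => 2) id y (continuous_const _ _) (continuous_id _)).
  - exact (continuous_minus (fun y => 2 * y * chebU (S n) y) (chebU n) y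
             (continuous_mult (fun y => 2 * y) (chebU (S n)) y
                (continuous_mult (fun _ => 2) id y (continuous_const _ _) (continuous_id _))
                IHSn)
             IHn).
Qed.

Lemma sin_mul_chebU_cos n t : sin t * chebU n (cos t) = sin (INR (S n) * t).
Proof.
  induction n as [| |n IHn IHSn] using nat_ind2.
  - rewrite Rmult_1_l; exact (Rmult_1_r _).
  - change (chebU 1 (cos t)) with (2 * cos t).
    replace (INR 2 * t) with (t + t) by (simpl; ring).
    rewrite sin_plus; ring.
  - rewrite chebU_SS.
    replace (sin t * (2 * cos t * chebU (S n) (cos t) - chebU n (cos t)))
      with (2 * cos t * (sin t * chebU (S n) (cos t)) - sin t * chebU n (cos t)) by ring.
    rewrite IHn, IHSn, !S_INR.
    replace ((INR n + 1 + 1 + 1) * t) with ((INR n + 1 + 1) * t + t) by ring.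
    replace ((INR n + 1) * t) with ((INR n + 1 + 1) * t - t) by ring.
    rewrite sin_plus, sin_minus. ring.
Qed.

Definition sin_sum (L : list (R * Z)) (t : R) : R :=
  fold_right (fun p s => fst p * sin (IZR (snd p) * t) + s) 0 L.

Definition sin_poly (d : nat) (g : R -> R) : Prop :=
  exists L, List.Forall (fun p => (Z.abs (snd p) <= Z.of_nat d)%Z) L /\
            forall t, g t = sin_sum L t.

Lemma sin_sum_app L1 L2 t : sin_sum (L1 ++ L2) t = sin_sum L1 t + sin_sum L2 t.
Proof. induction L1 as [|p L1 IH]; simpl; [|rewrite IH]; ring. Qed.

Lemma sin_sum_opp L t :
  sin_sum (map (fun p => (- fst p, snd p)) L) t = - sin_sum L t.
Proof. induction L as [|p L IH]; simpl; [|rewrite IH]; ring. Qed.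

Lemma sin_sum_mul_2cos L t :
  sin_sum (flat_map (fun p => (fst p, (snd p + 1)%Z) :: (fst p, (snd p - 1)%Z) :: nil) L) t
  = 2 * cos t * sin_sum L t.
Proof.
  induction L as [|[a l] L IH]; simpl; [ring|].
  rewrite IH, plus_IZR, minus_IZR.
  replace ((IZR l + 1) * t) with (IZR l * t + t) by ring.
  replace ((IZR l - 1) * t) with (IZR l * t - t) by ring.
  rewrite sin_plus, sin_minus. ring.
Qed.

Lemma sin_poly_ext d f g : (forall t, f t = g t) -> sin_poly d f -> sin_poly d g.
Proof.
  intros Hfg [L [HL Hf]]. exists L. split; [exact HL|].
  intros t. rewrite <- Hfg. apply Hf.
Qed.

Lemma sin_poly_weaken d d' g : (d <= d')%nat -> sin_poly d g -> sin_poly d' g.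
Proof.
  intros Hd [L [HL Hg]]. exists L. split; [|exact Hg].
  eapply Forall_impl; [|exact HL]. simpl; lia.
Qed.

Lemma sin_poly_sin : sin_poly 1 sin.
Proof.
  exists ((1, 1%Z) :: nil). split.
  - repeat constructor; simpl; lia.
  - intros t. simpl. rewrite !Rmult_1_l. ring.
Qed.

Lemma sin_poly_sub d f g : sin_poly d f -> sin_poly d g -> sin_poly d (fun t => f t - g t).
Proof.
  intros [L1 [HL1 Hf]] [L2 [HL2 Hg]].
  exists (L1 ++ map (fun p => (- fst p, snd p)) L2). split.
  - apply Forall_app; split; [exact HL1|].
    apply Forall_map. exact HL2.
  - intros t. rewrite sin_sum_app, sin_sum_opp, Hf, Hg. ring.
Qed.

Lemma sin_poly_mul_2cos d g : sin_poly d g -> sin_poly (S d) (fun t => 2 * cos t * g t).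
Proof.
  intros [L [HL Hg]].
  exists (flat_map (fun p => (fst p, (snd p + 1)%Z) :: (fst p, (snd p - 1)%Z) :: nil) L).
  split.
  - apply Forall_flat_map. eapply Forall_impl; [|exact HL].
    intros p Hp. simpl in Hp.
    constructor; [simpl; lia|]. constructor; [simpl; lia|]. constructor.
  - intros t. rewrite sin_sum_mul_2cos, Hg. reflexivity.
Qed.

Lemma sin_poly_mul_chebU_cos n d g :
  sin_poly d g -> sin_poly (d + n) (fun t => chebU n (cos t) * g t).
Proof.
  revert d g; induction n as [| |n IHn IHSn] using nat_ind2.
  - intros d g Hg. rewrite Nat.add_0_r.
    apply (sin_poly_ext _ g); [intros t; apply eq_sym, Rmult_1_l | exact Hg].
  - intros d g Hg. rewrite Nat.add_1_r.
    exact (sin_poly_mul_2cos d g Hg).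
  - intros d g Hg.
    apply (sin_poly_ext _ (fun t => 2 * cos t * (chebU (S n) (cos t) * g t)
                                    - chebU n (cos t) * g t)).
    { intros t. rewrite chebU_SS. ring. }
    apply sin_poly_sub.
    + replace (d + S (S n))%nat with (S (d + S n)) by lia.
      apply sin_poly_mul_2cos, IHSn, Hg.
    + apply (sin_poly_weaken (d + n)); [lia | apply IHn, Hg].
Qed.

Lemma is_RInt_sin_mul_sin_orth (l n : Z) : Z.abs l <> Z.abs n ->
  is_RInt (fun t => sin (IZR l * t) * sin (IZR n * t)) 0 PI 0.
Proof.
  intros Hln.
  assert (Hminus : IZR n - IZR l <> 0).
  { rewrite <- minus_IZR. apply not_0_IZR. lia. }
  assert (Hplus : IZR n + IZR l <> 0).
  { rewrite <- plus_IZR. apply not_0_IZR. lia. }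
  (* 2 sin (l t) sin (n t) = cos ((n - l) t) - cos ((n + l) t) *)
  set (F := fun t => sin ((IZR n - IZR l) * t) / (2 * (IZR n - IZR l))
                     - sin ((IZR n + IZR l) * t) / (2 * (IZR n + IZR l))).
  assert (HF : minus (F PI) (F 0) = 0).
  { assert (sin_int_PI : forall k, sin (IZR k * PI) = 0).
    { intros k. apply sin_eq_0_1. now exists k. }
    unfold F, minus, plus, opp; simpl.
    rewrite <- minus_IZR, <- plus_IZR, !sin_int_PI, !Rmult_0_r, sin_0.
    unfold Rdiv; ring. }
  enough (HI : is_RInt (fun t => sin (IZR l * t) * sin (IZR n * t)) 0 PI (minus (F PI) (F 0)))
    by now rewrite HF in HI.
  apply (is_RInt_derive F).
  - intros t _. unfold F. auto_derive; [repeat split|].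
    replace ((IZR n - IZR l) * t) with (IZR n * t - IZR l * t) by ring.
    replace ((IZR n + IZR l) * t) with (IZR n * t + IZR l * t) by ring.
    rewrite cos_minus, cos_plus. field. split; assumption.
  - intros t _. apply (@ex_derive_continuous R_AbsRing R_NormedModule). auto_derive. auto.
Qed.

Lemma is_RInt_sin_poly_mul_sin d g (n : nat) : sin_poly d g -> (d < n)%nat ->
  is_RInt (fun t => g t * sin (INR n * t)) 0 PI 0.
Proof.
  intros [L [HL Hg]] Hdn.
  apply (is_RInt_ext (fun t => sin_sum L t * sin (IZR (Z.of_nat n) * t))).
  { intros t _. now rewrite Hg, INR_IZR_INZ. }
  clear g Hg. induction L as [|[a l] L IH]; simpl.
  - apply (is_RInt_ext (V := R_NormedModule) (fun _ => zero)).
    { intros t _. exact (eq_sym (Rmult_0_l _)). }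
    pose proof (is_RInt_const (V := R_NormedModule) 0 PI zero) as H0.
    rewrite (scal_zero_r (K := R_Ring) (V := R_ModuleSpace)) in H0. exact H0.
  - inversion HL as [|? ? Hl HL']; subst. simpl in Hl.
    assert (Horth : is_RInt (fun t => sin (IZR l * t) * sin (IZR (Z.of_nat n) * t))
                            0 PI zero).
    { apply is_RInt_sin_mul_sin_orth. lia. }
    pose proof (is_RInt_plus _ _ _ _ _ _ (is_RInt_scal _ _ _ a _ Horth) (IH HL')) as Hsum.
    rewrite (scal_zero_r (K := R_Ring) (V := R_ModuleSpace)),
      (plus_zero_l (G := R_AbelianMonoid)) in Hsum.
    refine (is_RInt_ext _ _ _ _ _ _ Hsum).
    intros t _. unfold plus, scal; simpl. unfold mult; simpl. ring.
Qed.

Lemma RInt_sqrt_weight_cos (f : R -> R) :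
  (forall y, -1 <= y <= 1 -> continuous f y) ->
  RInt (fun y => f y * sqrt (1 - y ^ 2)) (-1) 1
  = RInt (fun t => f (cos t) * sin t ^ 2) 0 PI.
Proof.
  intros Hf.
  set (F := fun y => f y * sqrt (1 - y ^ 2)).
  assert (Hsubst : is_RInt (fun t => scal (- sin t) (F (cos t))) PI 0
                           (RInt F (cos PI) (cos 0))).
  { apply (is_RInt_comp (V := R_CompleteNormedModule) F cos).
    - intros t _. apply (continuous_mult f); [apply Hf, COS_bound|].
      apply continuous_sqrt_comp, (@ex_derive_continuous R_AbsRing R_NormedModule).
      auto_derive. auto.
    - intros t _. split.
      + auto_derive; auto. ring.
      + apply (@ex_derive_continuous R_AbsRing R_NormedModule). auto_derive. auto. }
  rewrite cos_PI, cos_0 in Hsubst.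
  apply is_RInt_swap, is_RInt_opp in Hsubst.
  rewrite opp_opp in Hsubst.
  apply eq_sym, is_RInt_unique.
  refine (is_RInt_ext _ _ _ _ _ _ Hsubst).
  intros t Ht. rewrite Rmin_left, Rmax_right in Ht by (pose proof PI_RGT_0; lra).
  assert (Hsin : sqrt (1 - cos t ^ 2) = sin t).
  { rewrite <- (sqrt_pow2 (sin t)) by (left; apply sin_gt_0; lra).
    f_equal. pose proof (sin2_cos2 t). unfold Rsqr in *. simpl. lra. }
  unfold F. rewrite Hsin. unfold opp, scal; simpl. unfold mult; simpl. ring.
Qed.

Lemma Ccoef_eq0 i j k m : m = (i + j + k + 2)%nat -> Ccoef i j k m = 0.
Proof.
  intros Hm. unfold Ccoef.
  rewrite RInt_sqrt_weight_cos.
  2:{ intros y _. repeat apply (continuous_mult (K := R_AbsRing)); apply continuous_chebU. }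
  rewrite (is_RInt_unique _ 0 PI 0); [ring|].
  assert (Hpoly : sin_poly (1 + k + j + i)
                    (fun t => chebU i (cos t) * (chebU j (cos t) * (chebU k (cos t) * sin t)))).
  { do 3 apply sin_poly_mul_chebU_cos. exact sin_poly_sin. }
  refine (is_RInt_ext _ _ _ _ _ _ (is_RInt_sin_poly_mul_sin _ _ (S m) Hpoly _)).
  - intros t _. rewrite <- sin_mul_chebU_cos. simpl. ring.
  - lia.
Qed.

Lemma Ccoef_perm i j k m i' j' k' m' :
  (forall y, chebU i y * chebU j y * chebU k y * chebU m y
             = chebU i' y * chebU j' y * chebU k' y * chebU m' y) ->
  Ccoef i j k m = Ccoef i' j' k' m'.
Proof.
  intros Hprod. unfold Ccoef. f_equal.
  apply RInt_ext. intros y _. now rewrite Hprod.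
Qed.

Lemma omega_add3_eq a b c d :
  omega a + omega b + omega c = omega d -> d = (a + b + c + 2)%nat.
Proof.
  unfold omega. intros H. apply INR_eq. rewrite !plus_INR. simpl. lra.
Qed.

Theorem lemma5p1 (i j k m : nat) :
  (omega i + omega j + omega k - omega m = 0 \/
   omega i + omega j - omega k + omega m = 0 \/
   omega i - omega j + omega k + omega m = 0 \/
   - omega i + omega j + omega k + omega m = 0) ->
  Ccoef i j k m = 0.
Proof.
  intros [H | [H | [H | H]]].
  - apply Ccoef_eq0, omega_add3_eq. lra.
  - rewrite (Ccoef_perm i j k m i j m k) by (intros; ring).
    apply Ccoef_eq0, omega_add3_eq. lra.
  - rewrite (Ccoef_perm i j k m i k m j) by (intros; ring).
    apply Ccoef_eq0, omega_add3_eq. lra.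
  - rewrite (Ccoef_perm i j k m j k m i) by (intros; ring).
    apply Ccoef_eq0, omega_add3_eq. lra.
Qed.
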